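(* Consider the max-min problem: maximize $t$ over $t$, $\mathbf{E}=(E_1,\dots,E_K)$, $\boldsymbol\tau=(\tau_0,\dots,\tau_K)$ subject to $R_i(E_i,\tau_i)\ge t$ for $i=1,\dots,K$, $\sum_{i=0}^K\tau_i\le 1$, $\sum_{i=1}^KE_i\le E_{max}$, $\tau_i\ge0$ for $i=0,\dots,K$, and $0\le E_i\le E_i^b+\eta_iP_Bh_i\tau_0$ for $i=1,\dots,K$. Then the optimal policy $(t^*,\mathbf E^*,\boldsymbol\tau^* )$ satisfies $R_i(E_i^*,\tau_i^* )=t^*$ for every $i=1,\dots,K$, i.e., all users achieve the same throughput.
   Context: Fix an integer $K\ge 1$ and positive constants $E_{max}$, $P_B$, and, for $i=1,\dots,K$, $E_i^b\ge 0$, $\eta_i\in(0,1)$, $h_i>0$, $g_i>0$, $\Gamma>0$, $\sigma^2>0$. Let $\alpha_i = g_i/(\Gamma\sigma^2)$. For $E_i\ge 0$, $\tau_i\ge 0$ define $R_i(E_i,\tau_i)=\tau_i\log_2\!\left(1+\alpha_i E_i/\tau_i\right)$ for $\tau_i>0$ and $R_i(E_i,0)=0$. *)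

From Stdlib Require Import Reals.
Open Scope R_scope.

Definition log2 (x : R) : R := ln x / ln 2.

(* R_i(E,tau) = tau log2(1 + a E / tau) for tau > 0, and 0 for tau = 0
   (also 0 for tau < 0, which never occurs for feasible points). *)
Definition rate (a E tau : R) : R :=
  if Rlt_dec 0 tau then tau * log2 (1 + a * E / tau) else 0.

Fixpoint sum1 (f : nat -> R) (n : nat) : R :=
  match n with
  | O => 0
  | S m => sum1 f m + f (S m)
  end.

(* Feasible set of the max-min problem.  Users are indexed 1..K;
   tau is indexed 0..K (tau 0 = harvesting time). *)
Definition feasible (K : nat) (Emax PB Gamma sigma2 : R)
    (Eb eta h g : nat -> R) (t : R) (E tau : nat -> R) : Prop :=
  (forall i, (1 <= i <= K)%nat ->
      rate (g i / (Gamma * sigma2)) (E i) (tau i) >= t) /\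
  tau 0%nat + sum1 tau K <= 1 /\
  sum1 E K <= Emax /\
  (forall i, (i <= K)%nat -> 0 <= tau i) /\
  (forall i, (1 <= i <= K)%nat ->
      0 <= E i /\ E i <= Eb i + eta i * PB * h i * tau 0%nat).

Definition optimal (K : nat) (Emax PB Gamma sigma2 : R)
    (Eb eta h g : nat -> R) (t : R) (E tau : nat -> R) : Prop :=
  feasible K Emax PB Gamma sigma2 Eb eta h g t E tau /\
  (forall t' E' tau', feasible K Emax PB Gamma sigma2 Eb eta h g t' E' tau' -> t' <= t).

(* If some user's throughput exceeded the optimum t*, scaling that user's
   energy and time by a factor lam < 1 (chosen so its throughput stays above
   t*, by homogeneity of R_i) frees time that can be spread over tau_0 and all
   other users; since tau log2(1 + a E / tau) is strictly increasing in tau,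
   every other user then strictly exceeds t* as well, so the minimum
   throughput exceeds t*, contradicting optimality.  Optimality also forces
   t* > 0, which makes all E_i* and tau_i* positive. *)

From Stdlib Require Import Reals Lra Lia.
Open Scope R_scope.

Lemma ln_lt_sub1 u : 0 < u -> u <> 1 -> ln u < u - 1.
Proof.
  intros Hu Hu1.
  assert (Hln : ln u <> 0).
  { intro E. apply Hu1. rewrite <- (exp_ln u Hu), E. apply exp_0. }
  pose proof (exp_ineq1 _ Hln) as H. rewrite exp_ln in H; lra.
Qed.

Lemma ln_le_sub1 u : 0 < u -> ln u <= u - 1.
Proof.
  intros Hu. destruct (Req_dec u 1) as [->|Hu1].
  - rewrite ln_1; lra.
  - left; now apply ln_lt_sub1.
Qed.

Lemma ln_perspective_increasing c t t' : 0 < c -> 0 < t -> t < t' ->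
  t * ln (1 + c / t) < t' * ln (1 + c / t').
Proof.
  intros Hc Ht Htt.
  set (A := 1 + c / t). set (B := 1 + c / t').
  assert (HB : 1 < B) by (unfold B; assert (0 < c / t') by (apply Rdiv_lt_0_compat; lra); lra).
  assert (HBA : B < A).
  { unfold A, B. apply Rplus_lt_compat_l, Rmult_lt_compat_l; [lra|].
    apply Rinv_lt_contravar; nra. }
  (* ln (A/B) < A/B - 1 and ln (1/B) <= 1/B - 1, combined with
     t (A/B - 1) = (t' - t)(1 - 1/B). *)
  assert (Hquot : ln A - ln B < A / B - 1).
  { replace (ln A - ln B) with (ln (A / B))
      by (unfold Rdiv; rewrite ln_mult, ln_Rinv; try lra; apply Rinv_0_lt_compat; lra).
    apply ln_lt_sub1; [apply Rdiv_lt_0_compat; lra|].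
    intro E. assert (HAB : A = A / B * B) by (field; lra). rewrite E in HAB. lra. }
  assert (Hinv : - ln B <= / B - 1).
  { rewrite <- ln_Rinv by lra. apply ln_le_sub1, Rinv_0_lt_compat; lra. }
  assert (Hgap : t * (A / B - 1) = (t' - t) * (1 - / B)).
  { replace B with ((t' + c) / t') by (unfold B; field; lra).
    unfold A. field. repeat split; lra. }
  assert (t * (ln A - ln B) < t * (A / B - 1)) by (apply Rmult_lt_compat_l; lra).
  assert ((t' - t) * (- ln B) <= (t' - t) * (/ B - 1)) by (apply Rmult_le_compat_l; lra).
  nra.
Qed.

Lemma ln2_pos : 0 < ln 2.
Proof. pose proof ln_lt_2; lra. Qed.

Lemma rate_nonpos_tau a E tau : tau <= 0 -> rate a E tau = 0.
Proof. intros Htau. unfold rate. destruct (Rlt_dec 0 tau); [lra|auto]. Qed.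

Lemma rate_0_energy a tau : rate a 0 tau = 0.
Proof.
  unfold rate, log2. destruct (Rlt_dec 0 tau); [|auto].
  replace (1 + a * 0 / tau) with 1 by (field; lra). rewrite ln_1. unfold Rdiv; ring.
Qed.

Lemma rate_pos a E tau : 0 < a -> 0 < E -> 0 < tau -> 0 < rate a E tau.
Proof.
  intros Ha HE Htau. unfold rate, log2. destruct (Rlt_dec 0 tau); [|lra].
  assert (0 < a * E / tau) by (apply Rdiv_lt_0_compat; nra).
  assert (0 < ln (1 + a * E / tau)) by (rewrite <- ln_1; apply ln_increasing; lra).
  pose proof ln2_pos.
  apply Rmult_lt_0_compat; [lra|]. apply Rdiv_lt_0_compat; lra.
Qed.

Lemma rate_increasing_tau a E tau tau' : 0 < a -> 0 < E -> 0 < tau -> tau < tau' ->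
  rate a E tau < rate a E tau'.
Proof.
  intros Ha HE Htau Htt. unfold rate, log2.
  destruct (Rlt_dec 0 tau); [|lra]. destruct (Rlt_dec 0 tau'); [|lra].
  pose proof (ln_perspective_increasing (a * E) tau tau' ltac:(nra) Htau Htt).
  pose proof ln2_pos.
  unfold Rdiv in *. rewrite <- !Rmult_assoc.
  apply Rmult_lt_compat_r; [apply Rinv_0_lt_compat; lra | assumption].
Qed.

Lemma rate_homogeneous a E tau l : 0 < l -> 0 < tau ->
  rate a (l * E) (l * tau) = l * rate a E tau.
Proof.
  intros Hl Htau. unfold rate.
  destruct (Rlt_dec 0 (l * tau)) as [_|Hlt]; [|exfalso; apply Hlt; nra].
  destruct (Rlt_dec 0 tau); [|lra].
  replace (a * (l * E) / (l * tau)) with (a * E / tau) by (field; lra). ring.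
Qed.

Lemma sum1_ext f f' n : (forall j, (1 <= j <= n)%nat -> f j = f' j) -> sum1 f n = sum1 f' n.
Proof.
  induction n as [|n IH]; simpl; intros H; [reflexivity|].
  rewrite IH by (intros; apply H; lia). rewrite H by lia. reflexivity.
Qed.

Lemma sum1_le f f' n : (forall j, (1 <= j <= n)%nat -> f j <= f' j) -> sum1 f n <= sum1 f' n.
Proof.
  induction n as [|n IH]; simpl; intros H; [lra|].
  assert (sum1 f n <= sum1 f' n) by (apply IH; intros; apply H; lia).
  assert (f (S n) <= f' (S n)) by (apply H; lia). lra.
Qed.

Lemma sum1_const c n : sum1 (fun _ => c) n = INR n * c.
Proof. induction n as [|n IH]; simpl sum1; [simpl; ring|]. rewrite IH, S_INR; ring. Qed.

Lemma sum1_add f f' n : sum1 (fun j => f j + f' j) n = sum1 f n + sum1 f' n.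
Proof. induction n as [|n IH]; simpl; [ring|]. rewrite IH; ring. Qed.

Definition update (f : nat -> R) (i : nat) (x : R) : nat -> R :=
  fun j => if Nat.eqb j i then x else f j.

Lemma update_eq f i x : update f i x i = x.
Proof. unfold update. now rewrite Nat.eqb_refl. Qed.

Lemma update_neq f i x j : j <> i -> update f i x j = f j.
Proof. intros Hne. unfold update. now rewrite (proj2 (Nat.eqb_neq j i) Hne). Qed.

Lemma sum1_update f i x n : (1 <= i <= n)%nat ->
  sum1 (update f i x) n = sum1 f n - f i + x.
Proof.
  induction n as [|n IH]; intros Hi; [lia|]. simpl sum1. unfold update at 2.
  destruct (Nat.eqb_spec (S n) i) as [<-|Hne].
  - rewrite (sum1_ext _ f); [ring|].
    intros j Hj. unfold update. destruct (Nat.eqb_spec j (S n)); [lia|reflexivity].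
  - rewrite IH by lia. ring.
Qed.

Lemma exists_gt_le_all (f : nat -> R) t n : (forall j, (1 <= j <= n)%nat -> t < f j) ->
  exists t', t < t' /\ forall j, (1 <= j <= n)%nat -> t' <= f j.
Proof.
  induction n as [|n IH]; intros H.
  - exists (t + 1). split; [lra|]. intros; lia.
  - destruct IH as [t' [Htt' Hle]]; [intros; apply H; lia|].
    exists (Rmin t' (f (S n))). split.
    + apply Rmin_glb_lt; [assumption|]. apply H; lia.
    + intros j Hj. destruct (Nat.eq_dec j (S n)) as [->|Hne]; [apply Rmin_r|].
      eapply Rle_trans; [apply Rmin_l|]. apply Hle; lia.
Qed.

Section MaxMinThroughput.

Variables (K : nat) (Emax PB Gamma sigma2 : R) (Eb eta h g : nat -> R).
Hypotheses (HK : (1 <= K)%nat) (HEmax : 0 < Emax) (HPB : 0 < PB)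
  (HGamma : 0 < Gamma) (Hsigma2 : 0 < sigma2)
  (HEb : forall i, (1 <= i <= K)%nat -> 0 <= Eb i)
  (Heta : forall i, (1 <= i <= K)%nat -> 0 < eta i < 1)
  (Hh : forall i, (1 <= i <= K)%nat -> 0 < h i)
  (Hg : forall i, (1 <= i <= K)%nat -> 0 < g i).

Local Notation feas := (feasible K Emax PB Gamma sigma2 Eb eta h g).
Local Notation snr i := (g i / (Gamma * sigma2)).

(* [feasible] is, by conversion, the throughput constraints conjoined with this. *)
Definition within_budget (E tau : nat -> R) : Prop :=
  tau 0%nat + sum1 tau K <= 1 /\
  sum1 E K <= Emax /\
  (forall i, (i <= K)%nat -> 0 <= tau i) /\
  (forall i, (1 <= i <= K)%nat -> 0 <= E i /\ E i <= Eb i + eta i * PB * h i * tau 0%nat).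

Lemma snr_pos i : (1 <= i <= K)%nat -> 0 < snr i.
Proof. intros Hi. apply Rdiv_lt_0_compat; [now apply Hg | nra]. Qed.

Lemma harvest_gain_pos i : (1 <= i <= K)%nat -> 0 < eta i * PB * h i.
Proof.
  intros Hi. pose proof (Heta i Hi). pose proof (Hh i Hi).
  apply Rmult_lt_0_compat; [apply Rmult_lt_0_compat|]; lra.
Qed.

Lemma exists_feasible_pos : exists t E tau, 0 < t /\ feas t E tau.
Proof.
  assert (HKpos : 0 < INR K) by (apply lt_0_INR; lia).
  set (tau := fun j => if Nat.eqb j 0 then 1 / 2 else / (2 * INR K)).
  set (E := fun j => Rmin (Emax / INR K) (Eb j + eta j * PB * h j * (1 / 2))).
  assert (Htau : forall j, (1 <= j <= K)%nat -> tau j = / (2 * INR K)).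
  { intros j Hj. unfold tau. destruct (Nat.eqb_spec j 0); [lia|reflexivity]. }
  assert (HE : forall j, (1 <= j <= K)%nat -> 0 < E j).
  { intros j Hj. pose proof (HEb j Hj). pose proof (harvest_gain_pos j Hj).
    apply Rmin_glb_lt; [apply Rdiv_lt_0_compat|]; lra. }
  destruct (exists_gt_le_all (fun j => rate (snr j) (E j) (tau j)) 0 K) as [t [Ht Hle]].
  { intros j Hj. apply rate_pos; [now apply snr_pos | now apply HE |].
    rewrite Htau by assumption. apply Rinv_0_lt_compat; lra. }
  exists t, E, tau. split; [assumption|]. refine (conj _ (conj _ (conj _ (conj _ _)))).
  - intros j Hj. apply Rle_ge, Hle, Hj.
  - rewrite (sum1_ext _ _ _ Htau), sum1_const. unfold tau; simpl. right; field; lra.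
  - apply Rle_trans with (sum1 (fun _ => Emax / INR K) K).
    + apply sum1_le. intros j _. apply Rmin_l.
    + rewrite sum1_const. right; field; lra.
  - intros j _. unfold tau. destruct (Nat.eqb j 0); [lra|].
    left; apply Rinv_0_lt_compat; lra.
  - intros j Hj. split; [left; now apply HE|]. unfold E, tau; simpl. apply Rmin_r.
Qed.

Lemma feasible_tau_pos t E tau j : feas t E tau -> 0 < t -> (1 <= j <= K)%nat -> 0 < tau j.
Proof.
  intros [Hr _] Ht Hj. destruct (Rle_lt_dec (tau j) 0) as [Hle|]; [|assumption].
  pose proof (Hr j Hj) as Hrj. rewrite rate_nonpos_tau in Hrj by assumption. lra.
Qed.

Lemma feasible_E_pos t E tau j : feas t E tau -> 0 < t -> (1 <= j <= K)%nat -> 0 < E j.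
Proof.
  intros [Hr [_ [_ [_ HE]]]] Ht Hj. destruct (HE j Hj) as [[Hpos|Hzero] _]; [assumption|].
  pose proof (Hr j Hj) as Hrj. rewrite <- Hzero, rate_0_energy in Hrj. lra.
Qed.

(* Shrinking user [i] by [lam] frees [(1 - lam) tau_i], which is shared
   equally by the [K] slots [0..K] other than [i]; the total time is unchanged. *)
Lemma shrink_within_budget E tau i lam : within_budget E tau ->
  (1 <= i <= K)%nat -> 0 <= lam <= 1 ->
  within_budget (update E i (lam * E i))
    (update (fun j => tau j + (1 - lam) * tau i / INR K) i (lam * tau i)).
Proof.
  intros [Htime [Henergy [Htau HE]]] Hi Hlam.
  assert (HKpos : 0 < INR K) by (apply lt_0_INR; lia).
  assert (Htaui : 0 <= tau i) by (apply Htau; lia).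
  set (d := (1 - lam) * tau i / INR K).
  assert (Hd : 0 <= d) by (unfold d; apply Rmult_le_pos; [nra | left; apply Rinv_0_lt_compat; lra]).
  unfold within_budget. rewrite (update_neq _ _ _ 0) by lia.
  refine (conj _ (conj _ (conj _ _))).
  - rewrite sum1_update, sum1_add, sum1_const by assumption.
    replace (INR K * d) with ((1 - lam) * tau i) by (unfold d; field; lra). lra.
  - rewrite sum1_update by assumption. pose proof (proj1 (HE i Hi)). nra.
  - intros j Hj. destruct (Nat.eq_dec j i) as [->|Hne].
    + rewrite update_eq. nra.
    + rewrite update_neq by assumption. pose proof (Htau j Hj). lra.
  - intros j Hj. pose proof (harvest_gain_pos j Hj). destruct (HE j Hj).
    destruct (Nat.eq_dec j i) as [->|Hne].
    + rewrite update_eq. split; nra.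
    + rewrite update_neq by assumption. split; nra.
Qed.

Lemma feasible_improve t E tau i : feas t E tau -> 0 < t -> (1 <= i <= K)%nat ->
  t < rate (snr i) (E i) (tau i) -> exists t' E' tau', t < t' /\ feas t' E' tau'.
Proof.
  intros Hfeas Ht Hi Hgt. pose proof Hfeas as [Hr Hbudget].
  set (r := rate (snr i) (E i) (tau i)) in Hgt.
  set (lam := (t + r) / (2 * r)).
  assert (Hlam : 0 < lam < 1).
  { unfold lam. split; [apply Rdiv_lt_0_compat; lra|].
    apply (Rmult_lt_reg_r (2 * r)); [lra|]. unfold Rdiv.
    rewrite Rmult_assoc, Rinv_l by lra. lra. }
  assert (Hlamr : t < lam * r).
  { unfold lam. replace ((t + r) / (2 * r) * r) with ((t + r) / 2) by (field; lra). lra. }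
  assert (HKpos : 0 < INR K) by (apply lt_0_INR; lia).
  set (d := (1 - lam) * tau i / INR K).
  assert (Hd : 0 < d) by (unfold d; pose proof (feasible_tau_pos _ _ _ i Hfeas Ht Hi);
                          apply Rdiv_lt_0_compat; nra).
  set (E' := update E i (lam * E i)).
  set (tau' := update (fun j => tau j + d) i (lam * tau i)).
  destruct (exists_gt_le_all (fun j => rate (snr j) (E' j) (tau' j)) t K) as [t' [Htt' Hle]].
  { intros j Hj. pose proof (feasible_tau_pos _ _ _ j Hfeas Ht Hj). unfold E', tau'.
    destruct (Nat.eq_dec j i) as [->|Hne].
    - rewrite !update_eq, rate_homogeneous by lra. exact Hlamr.
    - rewrite !update_neq by assumption. pose proof (Hr j Hj).
      pose proof (rate_increasing_tau (snr j) (E j) (tau j) (tau j + d) (snr_pos j Hj)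
                    (feasible_E_pos _ _ _ j Hfeas Ht Hj) ltac:(assumption) ltac:(lra)).
      lra. }
  exists t', E', tau'. split; [assumption|]. split.
  - intros j Hj. apply Rle_ge, Hle, Hj.
  - apply shrink_within_budget; [exact Hbudget | assumption | lra].
Qed.

End MaxMinThroughput.

Theorem theorem5 (K : nat) (Emax PB Gamma sigma2 : R) (Eb eta h g : nat -> R)
  (HK : (1 <= K)%nat) (HEmax : 0 < Emax) (HPB : 0 < PB)
  (HGamma : 0 < Gamma) (Hsigma2 : 0 < sigma2)
  (HEb : forall i, (1 <= i <= K)%nat -> 0 <= Eb i)
  (Heta : forall i, (1 <= i <= K)%nat -> 0 < eta i < 1)
  (Hh : forall i, (1 <= i <= K)%nat -> 0 < h i)
  (Hg : forall i, (1 <= i <= K)%nat -> 0 < g i)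
  (tstar : R) (Estar taustar : nat -> R) :
  optimal K Emax PB Gamma sigma2 Eb eta h g tstar Estar taustar ->
  forall i, (1 <= i <= K)%nat ->
    rate (g i / (Gamma * sigma2)) (Estar i) (taustar i) = tstar.
Proof.
  intros [Hfeas Hopt] i Hi.
  assert (Htstar : 0 < tstar).
  { destruct (exists_feasible_pos K Emax PB Gamma sigma2 Eb eta h g)
      as [t [E [tau [Ht Hf]]]]; try assumption.
    pose proof (Hopt _ _ _ Hf). lra. }
  pose proof (proj1 Hfeas i Hi) as Hge.
  destruct (Rle_lt_dec (rate (g i / (Gamma * sigma2)) (Estar i) (taustar i)) tstar)
    as [Hle|Hgt]; [lra|].
  destruct (feasible_improve K Emax PB Gamma sigma2 Eb eta h g HK HPB HGamma Hsigma2 Heta Hh Hg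
              tstar Estar taustar i Hfeas Htstar Hi Hgt) as [t' [E' [tau' [Hlt Hf']]]].
  pose proof (Hopt _ _ _ Hf'). lra.
Qed.
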